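(* Let $G$ be a mixed graph with short and long arcs. Then $G$ contains neither a directed long cycle nor a directed short cycle if and only if there exist mappings $\sigma_1,\sigma_2:V(G)\to\mathbb{N}$ such that: (1) for all $u,v\in V(G)$, $u$ and $v$ are connected by an undirected walk if and only if $(\sigma_1(u),\sigma_2(u))=(\sigma_1(v),\sigma_2(v))$; (2) for all $u,v\in V(G)$, there is a walk from $u$ to $v$ in $G$ using only edges and short arcs if and only if $\sigma_1(u)=\sigma_1(v)$; (3) for all $u,v\in V(G)$, if there is a directed short walk from $u$ to $v$ in $G$ then $\sigma_2(u)<\sigma_2(v)$; (4) for all $u,v\in V(G)$, if there is a directed long walk from $u$ to $v$ in $G$ then $\sigma_1(u)<\sigma_1(v)$.
   Context: A mixed graph $G$ has vertices, undirected edges $E(G)$ and arcs $A(G)$, where $A(G)$ is partitioned into short arcs and long arcs. A walk is a sequence $v_0,e_1,v_1,\dots,e_\ell,v_\ell$ ($\ell\ge0$) where each $e_i$ is an edge or arc joining $v_{i-1}$ and $v_i$; arcs may be traversed in either direction. A walk is undirected if it contains only edges, short if it contains a short arc but no long arc, and long if it contains a long arc. A walk from $u$ to $v$ is directed if either it is short and every short arc on it is traversed from tail to head, or it is long and every long arc on it is traversed from tail to head (short arcs then arbitrary). A cycle is a closed walk ($\ell\ge1$, $v_\ell=v_0$) with distinct $v_0,\dots,v_{\ell-1}$ and distinct $e_1,\dots,e_\ell$; it is directed short (resp. long) if it is a directed short (resp. long) walk. *)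

From HB Require Import structures.
From mathcomp Require Import all_boot.
Set Implicit Arguments. Unset Strict Implicit. Unset Printing Implicit Defensive.

Inductive ekind := Edge | ShortArc | LongArc.

Definition ekind_eqb (a b : ekind) : bool :=
  match a, b with
  | Edge, Edge | ShortArc, ShortArc | LongArc, LongArc => true
  | _, _ => false end.
Lemma ekind_eqP : Equality.axiom ekind_eqb.
Proof. by case; case; constructor. Qed.
HB.instance Definition _ := hasDecEq.Build ekind ekind_eqP.

(* Every link e joins src e and tgt e; for an arc, src e is the tail and
   tgt e the head; for an undirected edge the orientation is irrelevant. *)
Record mgraph (V E : finType) := MGraph {
  src : E -> V;
  tgt : E -> V;
  kind : E -> ekind }.

Section Walks.
Variables (V E : finType) (G : mgraph V E).

(* A walk is given by its start vertex and a sequence of steps (e, b):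
   b = true means e is traversed from src e to tgt e, b = false the reverse. *)
Definition sfrom (p : E * bool) : V := if p.2 then src G p.1 else tgt G p.1.
Definition sto   (p : E * bool) : V := if p.2 then tgt G p.1 else src G p.1.

Fixpoint is_walk (x : V) (s : seq (E * bool)) (y : V) : bool :=
  match s with
  | [::] => x == y
  | p :: s' => (sfrom p == x) && is_walk (sto p) s' y
  end.

Definition isE (p : E * bool) := kind G p.1 == Edge.
Definition isS (p : E * bool) := kind G p.1 == ShortArc.
Definition isL (p : E * bool) := kind G p.1 == LongArc.

Definition undirected_walk (s : seq (E * bool)) := all isE s.
Definition short_walk (s : seq (E * bool)) := has isS s && ~~ has isL s.
Definition long_walk (s : seq (E * bool)) := has isL s.

Definition directed (s : seq (E * bool)) :=
  (short_walk s && all (fun p => isS p ==> p.2) s)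
  || (long_walk s && all (fun p => isL p ==> p.2) s).

Definition directed_short_walk s := short_walk s && directed s.
Definition directed_long_walk s := long_walk s && directed s.

(* a cycle: closed walk of length >= 1 with distinct v_0..v_{l-1}
   (the start vertices of the steps) and distinct links e_1..e_l *)
Definition is_cycle (x : V) (s : seq (E * bool)) :=
  [&& 0 < size s, is_walk x s x, uniq (map sfrom s) & uniq (map fst s)].

Definition has_directed_short_cycle :=
  exists x s, is_cycle x s /\ directed_short_walk s.
Definition has_directed_long_cycle :=
  exists x s, is_cycle x s /\ directed_long_walk s.

End Walks.

From Stdlib Require Import ClassicalEpsilon.
From mathcomp Require Import all_boot zify.
Set Implicit Arguments. Unset Strict Implicit. Unset Printing Implicit Defensive.

(* Reachability by directed long walks is transitive and stable under appending
   walks without long arcs.  Without directed long cycles it is also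
   irreflexive: a closed directed long walk that is not a cycle either repeats
   a vertex, and splits there into two shorter closed walks, or traverses some
   link in both directions, which cannot be a long arc, so both traversals can
   be cut out; in each case a shorter closed directed long walk remains.  On a
   finite set, a strict order compatible with an equivalence has a rank
   function: the number of strict predecessors, refined by the index of the
   equivalence class.  This gives sigma1; directed short walks and undirected
   walks give sigma2 in the same way.  Conversely a directed cycle through x
   would force sigma x < sigma x. *)

Section Ranking.
Variables (T : finType) (eqv lt : T -> T -> Prop).
Hypotheses (eqv_refl : forall u, eqv u u) (eqv_sym : forall u v, eqv u v -> eqv v u)
  (eqv_trans : forall u v w, eqv u v -> eqv v w -> eqv u w)
  (lt_trans : forall u v w, lt u v -> lt v w -> lt u w)
  (lt_irrefl : forall u, ~ lt u u)
  (lt_eqv_trans : forall u v w, lt u v -> eqv v w -> lt u w).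

Let eqv_class u : {set T} := [set w | excluded_middle_informative (eqv w u)].
Let lt_below u : {set T} := [set w | excluded_middle_informative (lt w u)].

Let eqv_classE u w : (w \in eqv_class u) <-> eqv w u.
Proof. by rewrite inE; split => /sumboolP. Qed.

Let lt_belowE u w : (w \in lt_below u) <-> lt w u.
Proof. by rewrite inE; split => /sumboolP. Qed.

Let eqv_class_eq u v : eqv u v -> eqv_class u = eqv_class v.
Proof.
move=> Euv; apply/setP => w; apply/idP/idP => /eqv_classE Ew; apply/eqv_classE; eauto.
Qed.

Let lt_below_eq u v : eqv u v -> lt_below u = lt_below v.
Proof.
move=> Euv; apply/setP => w; apply/idP/idP => /lt_belowE Lw; apply/lt_belowE; eauto.
Qed.

Let lt_below_proper u v : lt u v -> lt_below u \proper lt_below v.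
Proof.
move=> Luv; apply/properP; split.
  by apply/subsetP => w /lt_belowE Lw; apply/lt_belowE; eauto.
by exists u; [apply/lt_belowE | apply/negP => /lt_belowE /lt_irrefl].
Qed.

(* The size of the strict down-set is strictly monotone along [lt]; adding
   the index of the class separates inequivalent elements. *)
Lemma rank_exists : exists rk : T -> nat,
  (forall u v, eqv u v <-> rk u = rk v) /\ (forall u v, lt u v -> rk u < rk v).
Proof.
pose N := #|{set T}|.
have class_lt_N u : enum_rank (eqv_class u) < N by exact: ltn_ord.
exists (fun u => #|lt_below u| * N + enum_rank (eqv_class u)); split.
- move=> u v; split => [Euv | /(congr1 (modn^~ N))].
    by rewrite (eqv_class_eq Euv) (lt_below_eq Euv).
  rewrite /= !modnMDl !modn_small // => /val_inj /enum_rank_inj Ecl.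
  by apply/eqv_classE; rewrite -Ecl; apply/eqv_classE.
- move=> u v /lt_below_proper /proper_card.
  move: (class_lt_N u) (class_lt_N v); nia.
Qed.

End Ranking.

Lemma split_not_uniq_map (S T : eqType) (f : S -> T) (s : seq S) :
  ~~ uniq (map f s) ->
  exists s1 p s2 p' s3, s = s1 ++ p :: s2 ++ p' :: s3 /\ f p = f p'.
Proof.
elim: s => [|p s IHs] //=; rewrite negb_and negbK => /orP [/mapP [p' s_p' Efp] | ].
  by case/splitPr: s_p' => s2 s3; exists [::], p, s2, p', s3.
by case/IHs => s1 [q [s2 [q' [s3 [-> Efq]]]]]; exists (p :: s1), q, s2, q', s3.
Qed.

Section Walks.
Variables (V E : finType) (G : mgraph V E).
Implicit Types (x y z u v w : V) (p : E * bool) (s t : seq (E * bool)).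

Lemma is_walk_cat x s1 s2 z :
  is_walk G x (s1 ++ s2) z = [exists y, is_walk G x s1 y && is_walk G y s2 z].
Proof.
elim: s1 x => [|p s1 IHs1] x /=.
  apply/idP/existsP => [W | [y /andP [/eqP -> //]]].
  by exists x; rewrite /= eqxx.
rewrite IHs1; apply/andP/existsP => [[-> /existsP [y /andP [W1 W2]]] | [y]].
  by exists y; rewrite W1.
by case/andP => /andP [-> W1] W2; split => //; apply/existsP; exists y; rewrite W1.
Qed.

Lemma walk_cat x y z s1 s2 :
  is_walk G x s1 y -> is_walk G y s2 z -> is_walk G x (s1 ++ s2) z.
Proof. by move=> W1 W2; rewrite is_walk_cat; apply/existsP; exists y; rewrite W1. Qed.

Definition flip p := (p.1, ~~ p.2).

Lemma flipK : involutive flip. Proof. by case=> e []. Qed.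

Lemma sfrom_flip p : sfrom G (flip p) = sto G p. Proof. by case: p => e []. Qed.
Lemma sto_flip p : sto G (flip p) = sfrom G p. Proof. by case: p => e []. Qed.

Lemma walk_rev x s y : is_walk G x s y -> is_walk G y (rev (map flip s)) x.
Proof.
elim: s x => [|p s IHs] x /=; first by move/eqP ->.
case/andP => /eqP Ex /IHs W; rewrite rev_cons -cats1; apply: walk_cat W _.
by rewrite /= sfrom_flip sto_flip Ex !eqxx.
Qed.

Lemma cycle_closed_walk x s : is_cycle G x s -> is_walk G x s x.
Proof. by case/and4P. Qed.

Lemma closed_walk_at_repeat x s1 p s2 p' s3 :
  is_walk G x (s1 ++ p :: s2 ++ p' :: s3) x -> sfrom G p = sfrom G p' ->
  is_walk G (sfrom G p) (p :: s2) (sfrom G p) /\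
  is_walk G (sfrom G p) (p' :: s3 ++ s1) (sfrom G p).
Proof.
rewrite is_walk_cat => /existsP [y /andP [W1]] /= /andP [/eqP Ey].
rewrite is_walk_cat => /existsP [z /andP [W2]] /= /andP [/eqP Ez W3] Epp'.
rewrite Epp' Ez eqxx W2; split => //; apply: walk_cat W3 _; by rewrite -Ez -Epp' Ey.
Qed.

Lemma closed_walk_at_reversal x s1 p s2 s3 :
  is_walk G x (s1 ++ p :: s2 ++ flip p :: s3) x ->
  is_walk G (sto G p) s2 (sto G p) /\ is_walk G (sfrom G p) (s3 ++ s1) (sfrom G p).
Proof.
rewrite is_walk_cat => /existsP [y /andP [W1]] /= /andP [/eqP Ey].
rewrite is_walk_cat => /existsP [z /andP [W2]] /= /andP [/eqP Ez W3].
rewrite sfrom_flip in Ez; subst z; rewrite sto_flip in W3.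
by split => //; apply: walk_cat W3 _; rewrite Ey.
Qed.

Section CycleExtraction.
Variables (q h : pred (E * bool)).
Hypothesis h_not_reversible : forall p, h p -> q p -> q (flip p) -> False.

Definition directed_by s := has h s && all q s.

Definition shorter_directed_closed_walk s :=
  exists y t, [/\ is_walk G y t y, size t < size s & directed_by t].

Lemma directed_by_perm s t : perm_eq s t -> directed_by s = directed_by t.
Proof. by move=> Est; rewrite /directed_by (perm_all _ Est) (perm_has _ Est). Qed.

Lemma directed_by_cat s t : directed_by (s ++ t) -> directed_by s \/ directed_by t.
Proof.
rewrite /directed_by all_cat has_cat => /andP [/orP [hs | ht] /andP [qs qt]].
  by left; rewrite qs hs.
by right; rewrite qt ht.
Qed.

Lemma not_directed_by_reversal p : ~ directed_by [:: p; flip p].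
Proof.
rewrite /directed_by /= !andbT orbF => /andP [/orP [hp | hp'] /andP [qp qp']].
  exact: h_not_reversible hp qp qp'.
by apply: h_not_reversible hp' qp' _; rewrite flipK.
Qed.

Lemma shorten_at_repeat x s1 p s2 p' s3 (s := s1 ++ p :: s2 ++ p' :: s3) :
  is_walk G x s x -> directed_by s -> sfrom G p = sfrom G p' ->
  shorter_directed_closed_walk s.
Proof.
move=> W Ds Epp'; have [W1 W2] := closed_walk_at_repeat W Epp'.
have rot : perm_eq s ((p :: s2) ++ (p' :: s3 ++ s1)) by rewrite perm_catC /= -catA.
have size_s : size s = (size s2).+1 + (size (s3 ++ s1)).+1.
  by rewrite (perm_size rot) (size_cat (p :: s2)).
move: Ds; rewrite (directed_by_perm rot) => /directed_by_cat [D1 | D2].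
  by exists (sfrom G p), (p :: s2); split => //=; lia.
by exists (sfrom G p), (p' :: s3 ++ s1); split => //=; lia.
Qed.

(* Both traversals of the link are dropped: by [h_not_reversible] neither of
   them is an [h]-step, so the remaining closed walks still contain one. *)
Lemma shorten_at_reversal x s1 p s2 s3 (s := s1 ++ p :: s2 ++ flip p :: s3) :
  is_walk G x s x -> directed_by s -> shorter_directed_closed_walk s.
Proof.
move=> W Ds; have [W2 W31] := closed_walk_at_reversal W.
have reorder : perm_eq s ([:: p; flip p] ++ s2 ++ (s3 ++ s1)).
  by apply/permP => a; rewrite !count_cat /= !count_cat /=; lia.
have size_s : size s = (size s2 + size (s3 ++ s1)).+2.
  by rewrite (perm_size reorder) /= (size_cat s2).
move: Ds; rewrite (directed_by_perm reorder).
case/directed_by_cat => [/not_directed_by_reversal [] | /directed_by_cat [D2 | D31]].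
  by exists (sto G p), s2; split => //; lia.
by exists (sfrom G p), (s3 ++ s1); split => //; lia.
Qed.

Lemma directed_closed_walk_shorten x s :
  is_walk G x s x -> directed_by s -> ~~ is_cycle G x s ->
  shorter_directed_closed_walk s.
Proof.
move=> W Ds; have s_gt0 : 0 < size s by case: s Ds {W}.
rewrite /is_cycle s_gt0 W {s_gt0} /= negb_and => /orP [].
  case/split_not_uniq_map => s1 [p [s2 [p' [s3 [Es Epp']]]]]; subst s.
  exact: shorten_at_repeat W Ds Epp'.
case/split_not_uniq_map => s1 [[e b] [s2 [[e' b'] [s3 [Es /= Ee]]]]]; subst e' s.
case: b b' W Ds => [] [] W Ds.
- exact: shorten_at_repeat W Ds erefl.
- exact: (shorten_at_reversal (p := (e, true)) W Ds).
- exact: (shorten_at_reversal (p := (e, false)) W Ds).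
- exact: shorten_at_repeat W Ds erefl.
Qed.

Lemma directed_cycle_of_closed_walk x s :
  is_walk G x s x -> directed_by s -> exists y t, is_cycle G y t /\ directed_by t.
Proof.
elim/ltn_ind: (size s) {-2}s (erefl (size s)) x => n IHn {}s Es x W Ds.
have [cyc | not_cyc] := boolP (is_cycle G x s); first by exists x, s.
have [y [t [Wt lt_ts Dt]]] := directed_closed_walk_shorten W Ds not_cyc.
by apply: (IHn (size t)) Wt Dt => //; rewrite -Es.
Qed.

End CycleExtraction.

Definition short_directed_step p := ~~ isL G p && (isS G p ==> p.2).
Definition long_directed_step p := isL G p ==> p.2.

Lemma directed_short_walkE s :
  directed_short_walk G s = directed_by short_directed_step (isS G) s.
Proof.
rewrite /directed_short_walk /directed /short_walk /long_walk /directed_by.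
have -> : all short_directed_step s =
    ~~ has (isL G) s && all (fun p => isS G p ==> p.2) s by rewrite -all_predC -all_predI.
by case: (has (isS G) s); case: (has (isL G) s); case: (all _ s); case: (all _ s).
Qed.

Lemma directed_long_walkE s :
  directed_long_walk G s = directed_by long_directed_step (isL G) s.
Proof.
rewrite /directed_long_walk /directed /short_walk /long_walk /directed_by.
by case: (has (isS G) s); case: (has (isL G) s); case: (all _ s); case: (all _ s).
Qed.

Lemma undirected_short_directed : subpred (isE G) short_directed_step.
Proof. by move=> p; rewrite /isE /short_directed_step /isL /isS => /eqP ->. Qed.

Lemma long_free_long_directed : subpred (fun p => ~~ isL G p) long_directed_step.
Proof. by move=> p /negPf; rewrite /long_directed_step => ->. Qed.

Lemma undirected_long_free s : undirected_walk G s -> all (fun p => ~~ isL G p) s.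
Proof. by apply: sub_all => p; rewrite /isE /isL => /eqP ->. Qed.

Lemma short_arc_not_reversible p :
  isS G p -> short_directed_step p -> short_directed_step (flip p) -> False.
Proof. by case: p => e [] /=; rewrite /short_directed_step /isS /= => ->; rewrite !andbF. Qed.

Lemma long_arc_not_reversible p :
  isL G p -> long_directed_step p -> long_directed_step (flip p) -> False.
Proof. by case: p => e [] /=; rewrite /long_directed_step /isL /= => ->. Qed.

Definition walk_rel (P : pred (seq (E * bool))) u v :=
  exists s, is_walk G u s v /\ P s.

Lemma walk_rel_refl (P : pred (seq (E * bool))) u : P [::] -> walk_rel P u u.
Proof. by exists [::]; rewrite /= eqxx. Qed.

Lemma walk_rel_sym (P : pred (seq (E * bool))) u v :
  (forall s, P s -> P (rev (map flip s))) -> walk_rel P u v -> walk_rel P v u.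
Proof.
move=> P_rev [s [W Ps]]; exists (rev (map flip s)).
by split; [apply: walk_rev | apply: P_rev].
Qed.

Lemma walk_rel_trans (P Q R : pred (seq (E * bool))) u v w :
  (forall s t, P s -> Q t -> R (s ++ t)) ->
  walk_rel P u v -> walk_rel Q v w -> walk_rel R u w.
Proof.
move=> PQR [s [Ws Ps]] [t [Wt Qt]]; exists (s ++ t).
by split; [apply: walk_cat Wt | apply: PQR].
Qed.

Lemma walk_rel_sub (P Q : pred (seq (E * bool))) u v :
  subpred P Q -> walk_rel P u v -> walk_rel Q u v.
Proof. by move=> PQ [s [W Ps]]; exists s; split; last apply: PQ. Qed.

Lemma rank_of_no_directed_cycle (a q h : pred (E * bool)) (D : pred (seq (E * bool))) :
  subpred a q -> (forall p, a (flip p) = a p) ->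
  (forall p, h p -> q p -> q (flip p) -> False) -> D =1 directed_by q h ->
  ~ (exists x s, is_cycle G x s /\ D s) ->
  exists sigma : V -> nat,
    (forall u v, walk_rel (all a) u v <-> sigma u = sigma v) /\
    (forall u v, walk_rel D u v -> sigma u < sigma v).
Proof.
move=> aq a_flip h_not_reversible DE acyclic; apply: rank_exists.
- by move=> u; apply: walk_rel_refl.
- move=> u v; apply: walk_rel_sym => s As; rewrite all_rev all_map.
  by apply/allP => p /(allP As); rewrite /= a_flip.
- by move=> u v w; apply: walk_rel_trans => s t; rewrite all_cat => -> ->.
- move=> u v w; apply: walk_rel_trans => s t; rewrite !DE /directed_by has_cat all_cat.
  by case/andP => -> -> /andP [_ ->].
- move=> u [s [W Ds]]; rewrite DE in Ds; apply: acyclic.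
  have [y [t [cyc Dt]]] := directed_cycle_of_closed_walk h_not_reversible W Ds.
  by exists y, t; rewrite DE.
- move=> u v w; apply: walk_rel_trans => s t; rewrite !DE /directed_by has_cat all_cat.
  by case/andP => -> -> /(sub_all aq) ->.
Qed.

End Walks.

Theorem mainTheorem15 (V E : finType) (G : mgraph V E) :
  (~ has_directed_long_cycle G /\ ~ has_directed_short_cycle G) <->
  (exists sigma1 sigma2 : V -> nat,
    [/\ (forall u v : V,
           (exists s, is_walk G u s v /\ undirected_walk G s) <->
           (sigma1 u, sigma2 u) = (sigma1 v, sigma2 v)),
        (forall u v : V,
           (exists s, is_walk G u s v /\ all (fun p => ~~ isL G p) s) <->
           sigma1 u = sigma1 v),
        (forall u v : V,
           (exists s, is_walk G u s v /\ directed_short_walk G s) ->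
           sigma2 u < sigma2 v)
      & (forall u v : V,
           (exists s, is_walk G u s v /\ directed_long_walk G s) ->
           sigma1 u < sigma1 v)]).
Proof.
split.
- case=> no_long_cycle no_short_cycle.
  have [sigma1 [eqv1 lt1]] := rank_of_no_directed_cycle (long_free_long_directed (G := G))
    (fun _ => erefl) (long_arc_not_reversible (G := G)) (directed_long_walkE G) no_long_cycle.
  have [sigma2 [eqv2 lt2]] := rank_of_no_directed_cycle (undirected_short_directed (G := G))
    (fun _ => erefl) (short_arc_not_reversible (G := G)) (directed_short_walkE G) no_short_cycle.
  exists sigma1, sigma2; split; [move=> u v | exact: eqv1 | exact: lt2 | exact: lt1].
  split=> [U | [_ /eqv2 //]].
  by rewrite ((eqv1 u v).1 (walk_rel_sub (undirected_long_free (G := G)) U)) ((eqv2 u v).1 U).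
- case=> sigma1 [sigma2 [_ _ lt2 lt1]].
  split=> -[x [s [/cycle_closed_walk W Ds]]].
  + by have := ltnn (sigma1 x); rewrite lt1 //; exists s.
  + by have := ltnn (sigma2 x); rewrite lt2 //; exists s.
Qed.
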